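(* Let $\{GM_n\}$ be the Gaussian Tetranacci numbers. Then for every $n\ge1$: (a) $\sum_{k=1}^nGM_k=\frac13\left(GM_{n+2}+2GM_n+GM_{n-1}-(1+i)\right)$; (b) $\sum_{k=1}^nGM_{2k+1}=\frac13\left(2GM_{2n+2}+GM_{2n}-GM_{2n-1}-2-2i\right)$; (c) $\sum_{k=1}^nGM_{2k}=\frac13\left(2GM_{2n+1}+GM_{2n-1}-GM_{2n-2}-2+i\right)$.
   Context: The Gaussian Tetranacci numbers are defined by $GM_0=0$, $GM_1=1$, $GM_2=1+i$, $GM_3=2+i$ and $GM_n=GM_{n-1}+GM_{n-2}+GM_{n-3}+GM_{n-4}$ for $n\ge4$. *)

From HB Require Import structures.
From mathcomp Require Import all_boot all_order all_algebra algC.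
Set Implicit Arguments. Unset Strict Implicit. Unset Printing Implicit Defensive.
Import Order.TTheory GRing.Theory Num.Theory.
Local Open Scope ring_scope.

Fixpoint GM (n : nat) : algC :=
  match n with
  | 0 => 0
  | 1 => 1
  | 2 => 1 + 'i
  | 3 => 2 + 'i
  | (((m.+1 as m1).+1 as m2).+1 as m3).+1 => GM m3 + GM m2 + GM m1 + GM m
  end.

(* Each identity is the closed form of a partial sum of an arbitrary sequence
   satisfying the Tetranacci recurrence: three times the sum minus the
   right-hand side has zero increments by the recurrence, so it is the constant
   fixed by the initial values.  The sum over odd indices is the sum over even
   indices of the shifted sequence. *)

From HB Require Import structures.
From mathcomp Require Import all_boot all_order all_algebra algC ring.
Import Order.TTheory GRing.Theory Num.Theory.
Local Open Scope ring_scope.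

Section TetranacciSums.

Variables (R : comPzRingType) (u : nat -> R).
Hypothesis uS : forall m, u m.+4 = u m.+3 + u m.+2 + u m.+1 + u m.

Lemma tetranacci_sum n :
  3 * \sum_(0 <= k < n.+2) u k
    = u n.+3 + 2 * u n.+1 + u n + (2 * u 0 + u 1 - u 3).
Proof.
elim: n => [|n IH]; first by rewrite !big_nat_recr //= big_geq //; ring.
by rewrite big_nat_recr //= mulrDr IH /= uS; ring.
Qed.

Lemma tetranacci_sum_even n :
  3 * \sum_(0 <= k < n.+2) u (2 * k)
    = 2 * u (2 * n).+3 + u (2 * n).+1 - u (2 * n)
      + (4 * u 0 + 3 * u 2 - 2 * u 3 - u 1).
Proof.
elim: n => [|n IH]; first by rewrite !big_nat_recr //= big_geq //; ring.
rewrite big_nat_recr //= mulrDr IH !mul2n !doubleS.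
by rewrite (uS n.*2.+1) (uS n.*2); ring.
Qed.

End TetranacciSums.

Lemma GM_rec m : GM m.+4 = GM m.+3 + GM m.+2 + GM m.+1 + GM m.
Proof. by []. Qed.

Lemma GM_init :
  [/\ GM 0 = 0, GM 1 = 1, GM 2 = 1 + 'i, GM 3 = 2 + 'i & GM 4 = 4 + 2 * 'i].
Proof. by split=> //=; ring. Qed.

Theorem mainTheorem13 (n : nat) (hn : (1 <= n)%N) :
  [/\ \sum_(1 <= k < n.+1) GM k
        = 3^-1 * (GM n.+2 + 2 * GM n + GM n.-1 - (1 + 'i)),
      \sum_(1 <= k < n.+1) GM (2 * k).+1
        = 3^-1 * (2 * GM (2 * n).+2 + GM (2 * n) - GM (2 * n).-1 - 2 - 2 * 'i)
    & \sum_(1 <= k < n.+1) GM (2 * k)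
        = 3^-1 * (2 * GM (2 * n).+1 + GM (2 * n).-1 - GM (2 * n).-2 - 2 + 'i)].
Proof.
case: n hn => [//|n] _.
have nz3 : (3 : algC) != 0 by rewrite pnatr_eq0.
have [GM0 GM1 GM2 GM3 GM4] := GM_init.
split; apply: (canRL (mulKf nz3)); rewrite ?mulnS ?add2n.
- have := @tetranacci_sum _ _ GM_rec n.
  rewrite big_ltn // GM0 add0r GM1 GM3 => ->; ring.
- have := @tetranacci_sum_even _ _ (fun m => GM_rec m.+1) n.
  rewrite big_ltn // mulrDr => /(canRL (addKr _)) ->.
  rewrite GM1 GM2 GM3 GM4; ring.
- have := @tetranacci_sum_even _ _ GM_rec n.
  rewrite big_ltn // GM0 add0r GM1 GM2 GM3 => ->; ring.
Qed.
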